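(* For $a\in[0,1)$, $m\in\mathbb{N}$ and $\theta\in[-\pi,\pi]\setminus\{0\}$ let \[ g_m(\theta;a):=\frac{|\sin(m\theta)-a\sin((m-1)\theta)|}{|\sin\theta|\sqrt{1+a^2-2a\cos\theta}}, \] and let $g_m(0;a)$ (and the values at $\pm\pi$, $0$ where $\sin\theta=0$) be defined by continuous extension. Then \[ \max_{\theta\in[-\pi,\pi]}g_m(\theta;a)=g_m(0;a)=\frac{m-a(m-1)}{1-a}. \]
   Context: $\mathbb{N}=\{1,2,\dots\}$. *)

From Stdlib Require Import Reals.
From Coquelicot Require Import Coquelicot.
Open Scope R_scope.

Definition g_formula (m : nat) (a theta : R) : R :=
  Rabs (sin (INR m * theta) - a * sin ((INR m - 1) * theta)) /
  (Rabs (sin theta) * sqrt (1 + a ^ 2 - 2 * a * cos theta)).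

(* g_m(theta; a): the formula where sin theta <> 0, and the (punctured)
   limit of the formula at points where sin theta = 0 (continuous extension). *)
Definition g (m : nat) (a theta : R) : R :=
  if Req_EM_T (sin theta) 0 then real (Lim (g_formula m a) theta)
  else g_formula m a theta.

(* Write m = n + 1 and U_n(t) = sin (n t) / sin t, a polynomial in cos t and
   hence continuous, with |U_n| <= n.  Expanding sin ((n + 1) t) gives
   sin (m t) - a sin ((m - 1) t) = sin t * (U_n(t) (cos t - a) + cos (n t)),
   so away from the isolated zeros of sin, g_m coincides with the continuous
   function |U_n (cos t - a) + cos (n t)| / sqrt (1 + a^2 - 2 a cos t), which
   is therefore also its continuous extension.  As |cos t - a| is at most that
   square root, and the root is at least 1 - a, this function is bounded by
   n + 1 / (1 - a), the value it takes at t = 0. *)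

From Stdlib Require Import Reals Lra Lia.
From Coquelicot Require Import Coquelicot.
Open Scope R_scope.

(* [sin_quot k t = sin (k t) / sin t] (Lemma [sin_mul_nat]), given by a
   recurrence that is meaningful also where [sin t = 0]. *)
Fixpoint sin_quot (k : nat) (t : R) : R :=
  match k with
  | O => 0
  | S k' => sin_quot k' t * cos t + cos (INR k' * t)
  end.

Lemma sin_mul_nat (k : nat) (t : R) : sin (INR k * t) = sin t * sin_quot k t.
Proof.
  induction k as [|k IH]; simpl sin_quot.
  - rewrite Rmult_0_l, sin_0; ring.
  - rewrite S_INR, Rmult_plus_distr_r, Rmult_1_l, sin_plus, IH; ring.
Qed.

Lemma Rabs_sin_quot_le (k : nat) (t : R) : Rabs (sin_quot k t) <= INR k.
Proof.
  induction k as [|k IH]; simpl sin_quot.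
  - rewrite Rabs_R0; simpl; lra.
  - rewrite S_INR.
    assert (Hc : Rabs (cos t) <= 1) by (apply Rabs_le, COS_bound).
    assert (Hck : Rabs (cos (INR k * t)) <= 1) by (apply Rabs_le, COS_bound).
    assert (Rabs (sin_quot k t) * Rabs (cos t) <= INR k * 1)
      by (apply Rmult_le_compat; auto using Rabs_pos).
    eapply Rle_trans; [apply Rabs_triang|].
    rewrite Rabs_mult; lra.
Qed.

Lemma sin_quot_0 (k : nat) : sin_quot k 0 = INR k.
Proof.
  induction k as [|k IH]; simpl sin_quot; [reflexivity|].
  rewrite IH, Rmult_0_r, cos_0, S_INR; ring.
Qed.

Lemma continuous_cos_mul (c t : R) : continuous (fun x => cos (c * x)) t.
Proof.
  apply continuous_cos_comp, (continuous_mult (fun _ => c)).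
  - apply continuous_const.
  - apply continuous_id.
Qed.

Lemma continuous_sin_quot (k : nat) (t : R) : continuous (sin_quot k) t.
Proof.
  induction k as [|k IH]; simpl sin_quot.
  - apply continuous_const.
  - apply (continuous_plus (fun x => sin_quot k x * cos x)).
    + apply (continuous_mult (sin_quot k)); [exact IH | apply continuous_cos].
    + apply continuous_cos_mul.
Qed.

Lemma Rabs_cos_sub_le_sqrt (a t : R) :
  Rabs (cos t - a) <= sqrt (1 + a ^ 2 - 2 * a * cos t).
Proof.
  rewrite <- sqrt_Rsqr_abs.
  apply sqrt_le_1_alt.
  pose proof (sin2_cos2 t); unfold Rsqr in *; nra.
Qed.

Lemma one_sub_le_sqrt (a t : R) :
  0 <= a <= 1 -> 1 - a <= sqrt (1 + a ^ 2 - 2 * a * cos t).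
Proof.
  intros Ha.
  rewrite <- (sqrt_pow2 (1 - a)) by lra.
  apply sqrt_le_1_alt.
  pose proof (COS_bound t); nra.
Qed.

Definition g_ext (n : nat) (a t : R) : R :=
  Rabs (sin_quot n t * (cos t - a) + cos (INR n * t)) /
  sqrt (1 + a ^ 2 - 2 * a * cos t).

Lemma g_formula_S (n : nat) (a t : R) :
  0 <= a < 1 -> sin t <> 0 -> g_formula (S n) a t = g_ext n a t.
Proof.
  intros Ha Hs.
  unfold g_formula, g_ext.
  replace (INR (S n) - 1) with (INR n) by (rewrite S_INR; ring).
  rewrite S_INR, Rmult_plus_distr_r, Rmult_1_l, sin_plus, sin_mul_nat.
  replace (sin t * sin_quot n t * cos t + cos (INR n * t) * sin t
             - a * (sin t * sin_quot n t))
    with (sin t * (sin_quot n t * (cos t - a) + cos (INR n * t))) by ring.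
  rewrite Rabs_mult.
  pose proof (one_sub_le_sqrt a t).
  pose proof (Rabs_no_R0 _ Hs).
  field; lra.
Qed.

Lemma continuous_g_ext (n : nat) (a t : R) :
  0 <= a < 1 -> continuous (g_ext n a) t.
Proof.
  intros Ha.
  apply (continuous_mult
           (fun x => Rabs (sin_quot n x * (cos x - a) + cos (INR n * x)))).
  - apply continuous_Rabs_comp,
      (continuous_plus (fun x => sin_quot n x * (cos x - a))).
    + apply (continuous_mult (sin_quot n)); [apply continuous_sin_quot|].
      apply (continuous_minus cos); [apply continuous_cos | apply continuous_const].
    + apply continuous_cos_mul.
  - apply continuous_Rinv_comp.
    + apply continuous_sqrt_comp, (continuous_minus (fun _ => 1 + a ^ 2)).
      * apply continuous_const.
      * apply (continuous_mult (fun _ => 2 * a)); [apply continuous_const|].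
        apply continuous_cos.
    + pose proof (one_sub_le_sqrt a t); lra.
Qed.

(* Distinct zeros of sin are at least PI > 1 apart. *)
Lemma sin_neq_0_near_root (t0 t : R) :
  sin t0 = 0 -> t <> t0 -> Rabs (t - t0) < 1 -> sin t <> 0.
Proof.
  intros H0 Hne Hd Hs.
  destruct (sin_eq_0_0 _ H0) as [j ->], (sin_eq_0_0 _ Hs) as [k ->].
  destruct (Z.eq_dec k j) as [->|Hkj]; [now apply Hne|].
  replace (IZR k * PI - IZR j * PI) with (IZR (k - j) * PI) in Hd
    by (rewrite minus_IZR; ring).
  pose proof PI_RGT_0; pose proof PI2_1.
  rewrite Rabs_mult, (Rabs_pos_eq PI) in Hd by lra.
  assert (Hkj1 : 1 <= Rabs (IZR (k - j))).
  { rewrite <- abs_IZR; apply IZR_le; lia. }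
  nra.
Qed.

Lemma is_lim_g_formula (n : nat) (a t0 : R) :
  0 <= a < 1 -> sin t0 = 0 -> is_lim (g_formula (S n) a) t0 (g_ext n a t0).
Proof.
  intros Ha H0.
  apply is_lim_ext_loc with (g_ext n a).
  - exists (mkposreal 1 Rlt_0_1); intros t Ht Hne.
    symmetry; apply g_formula_S; [exact Ha|].
    exact (sin_neq_0_near_root t0 t H0 Hne Ht).
  - apply (is_lim_comp_continuous (fun t => t)); [apply is_lim_id|].
    apply continuous_g_ext, Ha.
Qed.

Lemma g_S (n : nat) (a t : R) : 0 <= a < 1 -> g (S n) a t = g_ext n a t.
Proof.
  intros Ha; unfold g.
  destruct (Req_EM_T (sin t) 0) as [H0|Hs].
  - now rewrite (is_lim_unique _ _ _ (is_lim_g_formula n a t Ha H0)).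
  - now apply g_formula_S.
Qed.

Lemma g_ext_0 (n : nat) (a : R) : 0 <= a < 1 -> g_ext n a 0 = INR n + / (1 - a).
Proof.
  intros Ha; unfold g_ext.
  rewrite sin_quot_0, Rmult_0_r, cos_0.
  replace (1 + a ^ 2 - 2 * a * 1) with ((1 - a) ^ 2) by ring.
  rewrite sqrt_pow2, Rabs_pos_eq by (pose proof (pos_INR n); nra).
  field; lra.
Qed.

Lemma g_ext_le (n : nat) (a t : R) : 0 <= a < 1 -> g_ext n a t <= g_ext n a 0.
Proof.
  intros Ha.
  rewrite g_ext_0 by exact Ha; unfold g_ext.
  set (s := sqrt _).
  assert (Hs : 1 - a <= s) by (apply one_sub_le_sqrt; lra).
  assert (Hnum : Rabs (sin_quot n t * (cos t - a) + cos (INR n * t)) <= INR n * s + 1).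
  { pose proof (Rabs_sin_quot_le n t); pose proof (Rabs_cos_sub_le_sqrt a t).
    assert (Rabs (cos (INR n * t)) <= 1) by (apply Rabs_le, COS_bound).
    assert (Rabs (sin_quot n t) * Rabs (cos t - a) <= INR n * s)
      by (apply Rmult_le_compat; auto using Rabs_pos).
    eapply Rle_trans; [apply Rabs_triang|].
    rewrite Rabs_mult; lra. }
  apply Rle_trans with ((INR n * s + 1) / s).
  - apply Rmult_le_compat_r; [left; apply Rinv_0_lt_compat; lra | exact Hnum].
  - replace ((INR n * s + 1) / s) with (INR n + / s) by (field; lra).
    apply Rplus_le_compat_l, Rinv_le_contravar; lra.
Qed.

Theorem lemma5p1 (m : nat) (a : R) :
  (1 <= m)%nat -> 0 <= a < 1 ->
  (* the continuous extension exists at the points where sin theta = 0 *)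
  (forall theta, -PI <= theta <= PI -> sin theta = 0 ->
     ex_finite_lim (g_formula m a) theta) /\
  (* the maximum over [-pi, pi] is attained at 0 *)
  (forall theta, -PI <= theta <= PI -> g m a theta <= g m a 0) /\
  g m a 0 = (INR m - a * (INR m - 1)) / (1 - a).
Proof.
  intros Hm Ha.
  destruct m as [|n]; [lia|].
  split; [|split].
  - intros t _ H0.
    exists (g_ext n a t); now apply is_lim_g_formula.
  - intros t _.
    rewrite !g_S by exact Ha.
    now apply g_ext_le.
  - rewrite g_S, g_ext_0, S_INR by exact Ha.
    field; lra.
Qed.
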